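(* Let $(\Omega,\mathcal A)$ be a measurable space, let $K\subset\mathbb C^n$ be compact and let $A$ be a uniform algebra on $K$ whose maximal ideal space is a separable metric space. Let $f:\Omega\times K\to\mathbb C$ satisfy $f(\omega,\cdot)\in A$ for all $\omega$ and $f(\cdot,z)$ measurable for all $z\in K$. Then the map $\omega\mapsto\sigma(f(\omega,\cdot))$ is a random compact set in $\mathbb C$.
   Context: For $h\in A$, $\sigma(h)=\{\lambda\in\mathbb C:\lambda-h \text{ is not invertible in } A\}$. $\mathcal K'(\mathbb C)$ is the space of non-empty compact subsets of $\mathbb C$ with the Hausdorff distance and its Borel $\sigma$-algebra; a random compact set in $\mathbb C$ is a measurable map $\Omega\to\mathcal K'(\mathbb C)$. *)

From mathcomp Require Import all_boot all_algebra all_classical all_reals all_analysis.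
From mathcomp Require Import complex.
Import numFieldNormedType.Exports.
Import GRing.Theory Num.Theory.
Set Implicit Arguments. Unset Strict Implicit. Unset Printing Implicit Defensive.
Local Open Scope classical_set_scope.
Local Open Scope ring_scope.

(* The complex numbers are R[i] for R : realType,
   viewed as a numClosedFieldType so that MathComp-Analysis equips it with its
   normed (Euclidean) topology. *)
Definition CC (R : realType) : numClosedFieldType := R[i].

Definition cmod (R : realType) (x : CC R) : R :=
  Num.sqrt (complex.Re x ^+ 2 + complex.Im x ^+ 2).

Section UniformAlgebra.
Variables (R : realType) (n : nat).
Local Notation C := (CC R).
Local Notation V := 'rV[C]_n.

Definition eq_on (K : set V) (g h : V -> C) := forall z, K z -> g z = h z.

(* A uniform algebra on the compact set K: a subalgebra of C(K) (represented
   by functions V -> C, only their restrictions to K matter) on a non-empty K, containing the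
   constants, separating the points of K, and closed for the sup-norm on K. *)
Definition uniform_algebra (K : set V) (A : set (V -> C)) : Prop :=
  K !=set0 /\
  (forall g, A g -> {within K, continuous g}) /\
  (forall c : C, A (fun _ => c)) /\
  [/\ forall g h, A g -> A h -> A (fun z => g z + h z),
      forall (c : C) g, A g -> A (fun z => c * g z),
      forall g h, A g -> A h -> A (fun z => g z * h z),
      forall x y, K x -> K y -> x <> y -> exists2 g, A g & g x <> g y
    & forall (u : nat -> V -> C) (g : V -> C), (forall k, A (u k)) ->
        (forall e : R, 0 < e -> exists N, forall k, (N <= k)%N ->
            forall z, K z -> cmod (u k z - g z) < e) ->
        exists2 h, A h & eq_on K h g].

Definition spectrum (K : set V) (A : set (V -> C)) (h : V -> C) : set C :=
  [set l | ~ exists2 g, A g & forall z, K z -> (l - h z) * g z = 1].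

(* Maximal ideal space of A, realized (Gelfand) as the set of characters,
   i.e. nonzero multiplicative linear functionals on A.  Characters are
   represented as maps (V -> C) -> C, only their values on A matter. *)
Definition character (K : set V) (A : set (V -> C)) (phi : (V -> C) -> C) :=
  [/\ forall g h, A g -> A h -> eq_on K g h -> phi g = phi h,
      forall g h, A g -> A h -> phi (fun z => g z + h z) = phi g + phi h,
      forall (c : C) g, A g -> phi (fun z => c * g z) = c * phi g,
      forall g h, A g -> A h -> phi (fun z => g z * h z) = phi g * phi h
    & phi (fun _ => 1) = 1].

Definition char_eq (A : set (V -> C)) (phi psi : (V -> C) -> C) :=
  forall g, A g -> phi g = psi g.

Definition gelfand_open (K : set V) (A : set (V -> C))
    (U : set ((V -> C) -> C)) : Prop :=
  U `<=` character K A /\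
  forall phi, U phi -> exists (k : nat) (hs : 'I_k -> V -> C) (e : R),
    [/\ 0 < e, forall i, A (hs i) &
        forall psi, character K A psi ->
          (forall i, cmod (psi (hs i) - phi (hs i)) < e) -> U psi].

Definition max_ideal_space_separable_metric (K : set V) (A : set (V -> C)) :=
  exists d : ((V -> C) -> C) -> ((V -> C) -> C) -> R,
    [/\ forall phi psi, character K A phi -> character K A psi ->
          0 <= d phi psi /\ (d phi psi = 0 <-> char_eq A phi psi),
        forall phi psi, character K A phi -> character K A psi ->
          d phi psi = d psi phi,
        forall phi psi chi, character K A phi -> character K A psi ->
          character K A chi -> d phi chi <= d phi psi + d psi chi,
        forall U, U `<=` character K A ->
          (gelfand_open K A U <->
           forall phi, U phi -> exists2 e : R, 0 < e &
             forall psi, character K A psi -> d phi psi < e -> U psi)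
      & exists D : set ((V -> C) -> C),
          [/\ countable D, D `<=` character K A &
              forall phi, character K A phi -> forall e : R, 0 < e ->
                exists2 psi, D psi & d phi psi < e]].
End UniformAlgebra.

Section RandomCompact.
Variable R : realType.
Local Notation C := (CC R).

Definition nonempty_compacts : set (set C) := [set X | X !=set0 /\ compact X].

Local Open Scope ereal_scope.
Definition set_dist (a : C) (X : set C) : \bar R :=
  ereal_inf [set (cmod (a - b))%:E | b in X].
Definition hausdorff_dist (X Y : set C) : \bar R :=
  maxe (ereal_sup [set set_dist a Y | a in X])
       (ereal_sup [set set_dist b X | b in Y]).
Local Close Scope ereal_scope.

Definition hausdorff_open (U : set (set C)) : Prop :=
  U `<=` nonempty_compacts /\
  forall X, U X -> exists2 e : R, 0 < e &
    forall Y, nonempty_compacts Y -> (hausdorff_dist X Y < e%:E)%E -> U Y.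

Definition hausdorff_borel : set (set (set C)) :=
  <<s nonempty_compacts, hausdorff_open >>.

Definition random_compact_set (d : measure_display) (Omega : measurableType d)
    (F : Omega -> set C) : Prop :=
  (forall w, nonempty_compacts (F w)) /\
  forall B, hausdorff_borel B -> measurable (F @^-1` B).

Definition borel_measurable_C (d : measure_display) (Omega : measurableType d)
    (g : Omega -> C) : Prop :=
  forall B, <<s (open : set (set C)) >> B -> measurable (g @^-1` B).
End RandomCompact.

(* The spectrum of h in A contains h(K) and, by a Neumann series argument, is
   closed and bounded by the sup-norm of h on K, so it is a non-empty compact set.

   A map F into the non-empty compact sets is Borel for the Hausdorff metric as
   soon as the events "F(w) misses L" are measurable for every compact L: a
   Hausdorff-open set is a countable union of the patterns "covered by finitely
   many rational discs and meeting each of them", and these patterns are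
   expressed through such events.

   For F(w) = sigma(f(w)), L misses sigma(f(w)) iff L is covered by finitely many
   discs around rational points p, each carrying an element g of a countable
   sup-norm dense family of A with |(p - f(w)) g - 1| <= 1/2 on K.  By continuity
   this inequality only has to be tested on a countable dense subset of K, where
   it is a measurable condition on w because each f(., z) is. *)

From mathcomp Require Import all_boot all_algebra all_classical all_reals all_analysis.
From mathcomp Require Import complex.
From mathcomp Require Import ring lra.
Import numFieldNormedType.Exports.
Import GRing.Theory Num.Theory order.Order.TTheory.
Set Implicit Arguments. Unset Strict Implicit. Unset Printing Implicit Defensive.
Local Open Scope classical_set_scope.
Local Open Scope ring_scope.
Local Open Scope complex_scope.

Section ComplexModulus.
Variable R : realType.
Local Notation C := (CC R).
Implicit Types x y z : C.

Lemma normC_cmod x : `|x| = (cmod x)%:C.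
Proof. by rewrite /cmod normc_def. Qed.

Lemma cmod_ge0 x : 0 <= cmod x.
Proof. exact: sqrtr_ge0. Qed.

Lemma cmodM x y : cmod (x * y) = cmod x * cmod y.
Proof. by apply: (@complexI R); rewrite -normC_cmod normrM !normC_cmod rmorphM. Qed.

Lemma ler_cmodD x y : cmod (x + y) <= cmod x + cmod y.
Proof.
rewrite -lecR -normC_cmod rmorphD; apply: le_trans (ler_normD _ _) _.
by rewrite !normC_cmod.
Qed.

Lemma cmodN x : cmod (- x) = cmod x.
Proof. by apply: (@complexI R); rewrite -!normC_cmod normrN. Qed.

Lemma distcC x y : cmod (x - y) = cmod (y - x).
Proof. by rewrite -cmodN opprB. Qed.

Lemma ler_distcD x y z : cmod (x - z) <= cmod (x - y) + cmod (y - z).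
Proof. by have := ler_cmodD (x - y) (y - z); rewrite addrA subrK. Qed.

Lemma cmod0 : cmod (0 : C) = 0.
Proof. by apply: (@complexI R); rewrite -normC_cmod normr0. Qed.

Lemma cmod1 : cmod (1 : C) = 1.
Proof. by apply: (@complexI R); rewrite -normC_cmod normr1. Qed.

Lemma cmodV x : cmod x^-1 = (cmod x)^-1.
Proof. by apply: (@complexI R); rewrite -normC_cmod normfV normC_cmod fmorphV. Qed.

Lemma cmodX x k : cmod (x ^+ k) = cmod x ^+ k.
Proof. by apply: (@complexI R); rewrite -normC_cmod normrX normC_cmod rmorphXn. Qed.

Lemma ler_abs_Re x : `|complex.Re x| <= cmod x.
Proof.
case: x => a b; rewrite /cmod /= -sqrtr_sqr ler_sqrt ?lerDl ?sqr_ge0 //.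
by rewrite addr_ge0 ?sqr_ge0.
Qed.

Lemma ler_abs_Im x : `|complex.Im x| <= cmod x.
Proof.
case: x => a b; rewrite /cmod /= -sqrtr_sqr ler_sqrt ?lerDr ?sqr_ge0 //.
by rewrite addr_ge0 ?sqr_ge0.
Qed.

Lemma cmod_le_ReIm x : cmod x <= `|complex.Re x| + `|complex.Im x|.
Proof.
rewrite -lecR -normC_cmod rmorphD; case: x => a b /=.
have -> : (a +i* b)%C = a%:C + 'i * b%:C :> C.
  by apply/eqP; rewrite eq_complex /= !mul0r !mul1r !subr0 !add0r !addr0 !eqxx.
apply: le_trans (ler_normD _ _) _; rewrite normrM normCi mul1r.
by rewrite !normC_cmod /cmod /= !expr0n /= !addr0 !sqrtr_sqr.
Qed.

Lemma nbhs_cmodP x (P : set C) :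
  nbhs x P <-> exists2 r : R, 0 < r & forall y, cmod (x - y) < r -> P y.
Proof.
rewrite nbhs_ballP; split=> -[e e0 xeP].
  have e_real : e = (cmod e)%:C by rewrite -normC_cmod gtr0_norm.
  exists (cmod e); first by rewrite -ltcR -e_real.
  by move=> y xy; apply: xeP; rewrite -ball_normE /= normC_cmod e_real ltcR.
exists e%:C; first by rewrite /= ltcR.
by move=> y; rewrite -ball_normE /= normC_cmod ltcR; exact: xeP.
Qed.

Lemma open_cmodP (O : set C) :
  open O <-> forall x, O x -> exists2 r : R, 0 < r & forall y, cmod (x - y) < r -> O y.
Proof. by rewrite openE; split=> Oopen x /Oopen/nbhs_cmodP. Qed.

Lemma closed_cmod_ball (a : C) (r : R) : closed [set y : C | cmod (a - y) <= r].
Proof.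
rewrite -openC; apply/open_cmodP => x /= /negP; rewrite -ltNge => rax.
exists (cmod (a - x) - r); first by rewrite subr_gt0.
move=> y xy ay; have := ler_distcD a y x; rewrite (distcC y); lra.
Qed.

Lemma cmod_continuous : continuous (@cmod R : C -> R).
Proof.
move=> x U /nbhs_ballP[r /= r0 rU]; apply/nbhs_cmodP; exists r => // y xy.
apply: rU; rewrite /ball /= ltr_norml.
have := ler_distcD x y 0; have := ler_distcD y x 0; rewrite !subr0 (distcC y); lra.
Qed.

Lemma complex_of_pair_continuous : continuous (fun p : R * R => (p.1 +i* p.2)%C : C).
Proof.
move=> [a b] U /nbhs_cmodP[r r0 rU]; apply/nbhs_ballP; exists (r / 2) => /=; first lra.
move=> [a' b'] [/= aa' bb']; apply: rU; apply: le_lt_trans (cmod_le_ReIm _) _.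
by move: aa' bb'; rewrite /ball /=; lra.
Qed.

Lemma compact_closed_cmod_bounded (X : set C) (M : R) :
  closed X -> (forall x, X x -> cmod x <= M) -> compact X.
Proof.
move=> Xclosed XM; pose S := `[- M, M]%classic `*` `[- M, M]%classic.
pose pair_to_C (p : R * R) : C := (p.1 +i* p.2)%C.
have SXcompact : compact (S `&` pair_to_C @^-1` X).
  apply: compact_closedI; first by apply: compact_setX; exact: segment_compact.
  by apply: preimage_closed => // p _; exact: complex_of_pair_continuous.
have -> : X = pair_to_C @` (S `&` pair_to_C @^-1` X).
  apply/seteqP; split=> [x Xx|_ [p [_ Xp] <-] //].
  exists (complex.Re x, complex.Im x); last by case: x Xx.
  split; last by case: x Xx.
  by split; rewrite /= in_itv /= -ler_norml;
    [exact: le_trans (ler_abs_Re x) (XM _ Xx) | exact: le_trans (ler_abs_Im x) (XM _ Xx)].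
apply: continuous_compact SXcompact; apply: continuous_subspaceT.
exact: complex_of_pair_continuous.
Qed.

Lemma compact_cmod_bounded (X : set C) : compact X -> exists M : R, forall x, X x -> cmod x <= M.
Proof.
move=> /(continuous_compact (continuous_subspaceT cmod_continuous))/compact_bounded.
case=> M [_ XM]; exists (M + 1) => x Xx.
by have := XM (M + 1) ltac:(lra) (cmod x) (ex_intro2 _ _ x Xx erefl); rewrite /= ger0_norm ?cmod_ge0.
Qed.

Lemma compact_cmod_ball (a : C) (r : R) : compact [set y : C | cmod (a - y) <= r].
Proof.
apply: (@compact_closed_cmod_bounded _ (cmod a + r)); first exact: closed_cmod_ball.
by move=> y /= ay; have := ler_distcD y a 0; rewrite !subr0 (distcC y); lra.
Qed.

End ComplexModulus.

Section RationalPoints.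
Variable R : realType.
Local Notation C := (CC R).

Definition ratC (p : rat * rat) : C := ((ratr p.1 : R) +i* (ratr p.2 : R))%C.

Lemma ratr_dense (a e : R) : 0 < e -> exists q : rat, `|a - ratr q| < e.
Proof.
move=> e0; have [|q] := @rat_in_itvoo R (a - e) (a + e); first lra.
by rewrite in_itv /= => /andP[aq qa]; exists q; rewrite ltr_norml; apply/andP; split; lra.
Qed.

Lemma ratC_dense (x : C) (e : R) : 0 < e -> exists p, cmod (x - ratC p) < e.
Proof.
move=> e0; case: x => a b; have e2 : 0 < e / 2 by lra.
have [[q1 aq1] [q2 bq2]] := (ratr_dense a e2, ratr_dense b e2).
exists (q1, q2); apply: le_lt_trans (cmod_le_ReIm _) _; rewrite /=; lra.
Qed.

Lemma ratr_between (a b : R) : a < b -> exists2 q : rat, a < ratr q & ratr q < b.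
Proof. by move=> /rat_in_itvoo[q]; rewrite in_itv /= => /andP[]; exists q. Qed.

End RationalPoints.

Lemma expr_lt_eventually (R : archiRealFieldType) (q e : R) : 0 <= q -> q < 1 -> 0 < e ->
  exists N, forall k, (N <= k)%N -> q ^+ k < e.
Proof.
move=> q0 q1 e0; have := @cvg_expr R q; rewrite ger0_norm // => /(_ q1).
move/cvgrPdist_lt => /(_ e e0) [N _ qN]; exists N => k /qN /=.
by rewrite sub0r normrN ger0_norm // exprn_ge0.
Qed.

Section UniformAlgebra.
Variables (R : realType) (n : nat).
Local Notation C := (CC R).
Local Notation V := 'rV[C]_n.
Variables (K : set V) (A : set (V -> C)).
Hypotheses (Kcompact : compact K) (Aunif : uniform_algebra K A).

Lemma ua_neq0 : K !=set0. Proof. by case: Aunif. Qed.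

Lemma ua_continuous g : A g -> {within K, continuous g}.
Proof. by case: Aunif => _ [cont _]; exact: cont. Qed.

Lemma ua_cst (c : C) : A (fun _ => c).
Proof. by case: Aunif => _ [_ []]. Qed.

Lemma ua_add g h : A g -> A h -> A (fun z => g z + h z).
Proof. by case: Aunif => _ [_ [_ [add _ _ _ _]]]; exact: add. Qed.

Lemma ua_scale (c : C) g : A g -> A (fun z => c * g z).
Proof. by case: Aunif => _ [_ [_ [_ scale _ _ _]]]; exact: scale. Qed.

Lemma ua_mul g h : A g -> A h -> A (fun z => g z * h z).
Proof. by case: Aunif => _ [_ [_ [_ _ mul _ _]]]; exact: mul. Qed.

Lemma ua_uniform_limit (u : nat -> V -> C) (g : V -> C) : (forall k, A (u k)) ->
  (forall e : R, 0 < e -> exists N, forall k, (N <= k)%N ->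
      forall z, K z -> cmod (u k z - g z) < e) ->
  exists2 h, A h & eq_on K h g.
Proof. by case: Aunif => _ [_ [_ [_ _ _ _ lim]]]; exact: lim. Qed.

Lemma ua_sub g h : A g -> A h -> A (fun z => g z - h z).
Proof.
move=> Ag Ah; have := ua_add Ag (ua_scale (-1) Ah).
by under eq_fun do rewrite mulN1r.
Qed.

Lemma ua_bounded g : A g -> exists2 M : R, 0 <= M & forall z, K z -> cmod (g z) <= M.
Proof.
move=> Ag; have [z0 Kz0] := ua_neq0.
have [M gKM] := compact_cmod_bounded (continuous_compact (ua_continuous Ag) Kcompact).
have gM z : K z -> cmod (g z) <= M by move=> Kz; apply: gKM; exists z.
by exists M => //; exact: le_trans (cmod_ge0 _) (gM _ Kz0).
Qed.

Lemma ua_invertible_1B (u : V -> C) (q : R) : A u -> q < 1 ->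
  (forall z, K z -> cmod (u z) <= q) ->
  exists2 v, A v & forall z, K z -> (1 - u z) * v z = 1.
Proof.
move=> Au q1 uq; have [z0 Kz0] := ua_neq0.
have q0 : 0 <= q := le_trans (cmod_ge0 _) (uq _ Kz0).
have one_u_ge z : K z -> 1 - q <= cmod (1 - u z).
  by move=> Kz; have := ler_cmodD (1 - u z) (u z); rewrite subrK cmod1; have := uq _ Kz; lra.
have one_u_neq0 z : K z -> 1 - u z != 0.
  by move=> Kz; apply/eqP => u1; have := one_u_ge _ Kz; rewrite u1 cmod0; lra.
pose s := fix s (k : nat) : V -> C :=
  if k is k'.+1 then fun z => 1 + u z * s k' z else fun _ => 0.
have As k : A (s k).
  by elim: k => [|k IH]; [exact: ua_cst | exact: ua_add (ua_cst 1) (ua_mul Au IH)].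
have sE k z : (1 - u z) * s k z = 1 - u z ^+ k.
  elim: k => [|k IH] /=; first by rewrite mulr0 expr0 subrr.
  by rewrite mulrDr mulr1 mulrCA IH exprS; ring.
have s_err k z : K z -> s k z - (1 - u z)^-1 = - u z ^+ k / (1 - u z).
  move=> Kz; apply: (mulfI (one_u_neq0 _ Kz)).
  by rewrite mulrBr sE mulrCA divff ?one_u_neq0 // mulr1; ring.
have [v Av vE] : exists2 v, A v & eq_on K v (fun z => (1 - u z)^-1).
  apply: (ua_uniform_limit As) => e e0.
  have [N qN] := @expr_lt_eventually _ q (e * (1 - q)) q0 q1 ltac:(nra).
  exists N => k Nk z Kz; rewrite s_err // cmodM cmodN cmodX cmodV.
  have uqk : cmod (u z) ^+ k <= q ^+ k by rewrite lerXn2r ?nnegrE ?cmod_ge0 ?uq.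
  have := qN _ Nk; have := one_u_ge _ Kz; have := exprn_ge0 k (cmod_ge0 (u z)).
  move=> uk0 uz qk; rewrite ltr_pdivrMr; last lra.
  by apply: le_lt_trans uqk _; apply: lt_le_trans qk _; rewrite ler_pM2l //; lra.
by exists v => // z Kz; rewrite vE // divff ?one_u_neq0.
Qed.

End UniformAlgebra.

Section Spectrum.
Variables (R : realType) (n : nat).
Local Notation C := (CC R).
Local Notation V := 'rV[C]_n.
Variables (K : set V) (A : set (V -> C)).
Hypotheses (Kcompact : compact K) (Aunif : uniform_algebra K A).

Lemma notin_spectrumP h l :
  ~ spectrum K A h l <-> exists2 g, A g & forall z, K z -> (l - h z) * g z = 1.
Proof. by rewrite /spectrum /= notK. Qed.

Lemma spectrum_image h z : K z -> spectrum K A h (h z).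
Proof.
move=> Kz [g _ /(_ z Kz)]; rewrite subrr mul0r => /eqP.
by rewrite eq_sym oner_eq0.
Qed.

Lemma spectrum_neq0 h : spectrum K A h !=set0.
Proof. by have [z Kz] := ua_neq0 Aunif; exists (h z); exact: spectrum_image. Qed.

Lemma notin_spectrum_perturb h g (l l' : C) (M c : R) : A h -> A g ->
  (forall z, K z -> cmod (g z) <= M) ->
  (forall z, K z -> cmod ((l - h z) * g z - 1) <= c) ->
  c + cmod (l' - l) * M < 1 -> ~ spectrum K A h l'.
Proof.
move=> Ah Ag gM lhg_c small.
pose u z := 1 - (l' - h z) * g z.
have Au : A u := ua_sub Aunif (ua_cst Aunif 1) (ua_mul Aunif (ua_sub Aunif (ua_cst Aunif l') Ah) Ag).
have uc z : K z -> cmod (u z) <= c + cmod (l' - l) * M.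
  move=> Kz; rewrite /u (_ : _ - _ = - ((l - h z) * g z - 1) - (l' - l) * g z); last ring.
  apply: le_trans (ler_cmodD _ _) _; rewrite !cmodN cmodM.
  by apply: lerD; [exact: lhg_c | apply: ler_wpM2l; [exact: cmod_ge0 | exact: gM]].
have [v Av uv] := ua_invertible_1B Aunif Au small uc.
apply/notin_spectrumP; exists (fun z => g z * v z); first exact (ua_mul Aunif Ag Av).
by move=> z Kz; rewrite -[RHS](uv z Kz) /u; ring.
Qed.

Lemma spectrum_cmod_le h (M : R) (l : C) : A h ->
  (forall z, K z -> cmod (h z) <= M) -> spectrum K A h l -> cmod l <= M.
Proof.
move=> Ah hM; apply: contraPP => /negP; rewrite -ltNge => Ml.
have [z0 Kz0] := ua_neq0 Aunif.
have M0 : 0 <= M := le_trans (cmod_ge0 _) (hM _ Kz0).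
have l0 : l != 0 by apply/eqP => l0; move: Ml; rewrite l0 cmod0; lra.
have hl z : K z -> cmod (l^-1 * h z) <= M / cmod l.
  by move=> Kz; rewrite cmodM cmodV mulrC ler_wpM2r ?invr_ge0 ?cmod_ge0 ?hM.
have Ml1 : M / cmod l < 1 by rewrite ltr_pdivrMr ?mul1r //; lra.
have [v Av hlv] := ua_invertible_1B Aunif (ua_scale Aunif l^-1 Ah) Ml1 hl.
apply/notin_spectrumP; exists (fun z => l^-1 * v z); first exact (ua_scale Aunif _ Av).
by move=> z Kz; rewrite -[RHS](hlv z Kz); field.
Qed.

Lemma spectrum_closed h : A h -> closed (spectrum K A h).
Proof.
move=> Ah; rewrite -openC; apply/open_cmodP => l /notin_spectrumP[g Ag lhg].
have [M M0 gM] := ua_bounded Kcompact Aunif Ag.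
exists (1 / (2 * (M + 1))); first by rewrite divr_gt0 //; lra.
move=> l' ll'; apply: (@notin_spectrum_perturb h g l l' M 0) => //.
  by move=> z Kz; rewrite lhg // subrr cmod0.
rewrite add0r distcC.
have : cmod (l - l') * (2 * (M + 1)) < 1 by rewrite -ltr_pdivlMr //; lra.
by have := cmod_ge0 (l - l'); nra.
Qed.

Lemma spectrum_compact h : A h -> compact (spectrum K A h).
Proof.
move=> Ah; have [M _ hM] := ua_bounded Kcompact Aunif Ah.
apply: (@compact_closed_cmod_bounded _ _ M); first exact: spectrum_closed.
by move=> l; exact: spectrum_cmod_le.
Qed.

End Spectrum.

Lemma compact_nbhs_finite_cover (T : ptopologicalType) (I : choiceType) (X : set T)
    (D : set I) (U : I -> set T) :
  compact X -> (forall x, X x -> exists2 i, D i & nbhs x (U i)) ->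
  exists s : seq I, (forall i, i \in s -> D i) /\
    (forall x, X x -> exists2 i, i \in s & U i x).
Proof.
rewrite compact_cover => Xcompact XU.
have [D' D'D XD'] := Xcompact I D (fun i => (U i)°) (fun i _ => @open_interior _ _)
  (fun x Xx => let: ex_intro2 i Di xUi := XU x Xx in ex_intro2 _ _ i Di xUi).
exists (finmap.enum_fset D'); split; first by move=> i /D'D; rewrite inE.
by move=> x /XD'[i D'i xUi]; exists i => //; exact: nbhs_singleton xUi.
Qed.

Section RationalBoxes.
Variables (R : realType) (n : nat).
Local Notation C := (CC R).
Local Notation V := 'rV[C]_n.

Lemma nbhs_row_cmodP (z : V) (P : set V) :
  nbhs z P <-> exists2 r : R, 0 < r &
    forall z' : V, (forall i, cmod (z 0 i - z' 0 i) < r) -> P z'.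
Proof.
rewrite nbhs_ballP; split=> -[e e0 zeP].
  have e_real : e = (cmod e)%:C by rewrite -normC_cmod gtr0_norm.
  exists (cmod e); first by rewrite -ltcR -e_real.
  move=> z' zz'; apply: zeP; split=> // i j.
  by rewrite (ord1 i) -ball_normE /= normC_cmod e_real ltcR; exact: zz'.
exists e%:C; first by rewrite /= ltcR.
move=> z' [_ zz']; apply: zeP => i.
by have := zz' 0 i; rewrite -ball_normE /= normC_cmod ltcR.
Qed.

Definition box_code := ({ffun 'I_n -> rat * rat} * rat)%type.

Definition rat_box (b : box_code) : set V :=
  [set z | forall i, cmod (z 0 i - ratC R (b.1 i)) < ratr b.2].

Lemma rat_box_basis (z : V) (P : set V) :
  nbhs z P -> exists b, nbhs z (rat_box b) /\ rat_box b `<=` P.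
Proof.
move/nbhs_row_cmodP => [r r0 zrP].
have [rho rho0 rho_r] := @ratr_between R 0 (r / 4) ltac:(lra).
have /choice[c zc] i : exists p, cmod (z 0 i - ratC R p) < ratr rho / 2.
  by apply: ratC_dense; rewrite divr_gt0.
exists ([ffun i => c i], rho); split.
- apply/nbhs_row_cmodP; exists (ratr rho / 2); first lra.
  move=> z' zz' i; rewrite /= ffunE.
  by have := ler_distcD (z' 0 i) (z 0 i) (ratC R (c i)); rewrite (distcC (z' 0 i) (z 0 i));
    have := zz' i; have := zc i; lra.
- move=> z' z'b; apply: zrP => i; have := z'b i; rewrite /= ffunE => z'c.
  by have := ler_distcD (z 0 i) (ratC R (c i)) (z' 0 i); rewrite (distcC (ratC R (c i)));
    have := zc i; lra.
Qed.

Definition box_point (K : set V) (b : box_code) : V := xget 0 (K `&` rat_box b).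

Lemma box_pointP K b : K `&` rat_box b !=set0 -> (K `&` rat_box b) (box_point K b).
Proof. exact: xgetPex. Qed.

Lemma box_point_near K z (P : set V) : K z -> nbhs z P ->
  exists2 b, K `&` rat_box b !=set0 & P (box_point K b).
Proof.
move=> Kz /rat_box_basis[b [zb bP]].
have Kb : K `&` rat_box b !=set0 by exists z; split => //; exact: nbhs_singleton zb.
by exists b => //; apply: bP; case: (box_pointP Kb).
Qed.

Lemma within_continuous_cmod_near (K : set V) (g : V -> C) z (e : R) :
  {within K, continuous g} -> K z -> 0 < e ->
  nbhs z (fun z' => K z' -> cmod (g z - g z') < e).
Proof.
move=> /subspace_continuousP gcont Kz e0.
have gze : nbhs (g z) [set y | cmod (g z - y) < e] by apply/nbhs_cmodP; exists e.
by have := gcont z Kz _ gze; rewrite /= nbhs_simpl /within.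
Qed.

Lemma cmod_le_on_box_points (K : set V) (g : V -> C) (c : R) : {within K, continuous g} ->
  (forall b, K `&` rat_box b !=set0 -> cmod (g (box_point K b)) <= c) ->
  forall z, K z -> cmod (g z) <= c.
Proof.
move=> gcont gc z Kz; rewrite leNgt; apply/negP => cgz.
have e0 : 0 < cmod (g z) - c by rewrite subr_gt0.
have [b Kb near_gz] := box_point_near Kz (within_continuous_cmod_near gcont Kz e0).
have := gc b Kb; have := near_gz (box_pointP Kb).1.
by have := ler_distcD (g z) (g (box_point K b)) 0; rewrite !subr0; lra.
Qed.

End RationalBoxes.

Section DenseFamily.
Variables (R : realType) (n : nat).
Local Notation C := (CC R).
Local Notation V := 'rV[C]_n.
Variables (K : set V) (A : set (V -> C)).
Hypotheses (Kcompact : compact K) (Aunif : uniform_algebra K A).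

Definition fn_code := (seq (box_code n * (rat * rat)) * rat)%type.

Definition fits_code (j : fn_code) (g : V -> C) :=
  forall p, p \in j.1 -> forall z, K z -> rat_box p.1 z ->
    cmod (g z - ratC R p.2) <= ratr j.2.

(* When no element of [A] fits [j], [xget] falls back to the constant [0], which is in [A] too. *)
Definition code_fn (j : fn_code) : V -> C := xget (fun=> 0) [set g | A g /\ fits_code j g].

Lemma code_fn_in j : A (code_fn j).
Proof. by rewrite /code_fn; case: xgetP => [g _ []|_]; last exact: (ua_cst Aunif). Qed.

Lemma code_fn_fits j g : A g -> fits_code j g -> fits_code j (code_fn j).
Proof.
move=> Ag jg; have : [set g | A g /\ fits_code j g] (code_fn j) by apply: xgetPex; exists g.
by case.
Qed.

Lemma code_fn_dense g (e : R) : A g -> 0 < e ->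
  exists j, forall z, K z -> cmod (code_fn j z - g z) <= e.
Proof.
move=> Ag e0; have [dl dl0 dl_e] := @ratr_between R 0 (e / 2) ltac:(lra).
have dl2 : 0 < ratr dl / 2 :> R by lra.
pose D := [set p : box_code n * (rat * rat) | forall z, K z -> rat_box p.1 z ->
  cmod (g z - ratC R p.2) <= ratr dl].
have cover z : K z -> exists2 p, D p & nbhs z (rat_box p.1).
  move=> Kz; have [c gzc] := ratC_dense (g z) dl2.
  have [b [zb bnear]] := rat_box_basis
    (within_continuous_cmod_near (ua_continuous Aunif Ag) Kz dl2).
  exists (b, c) => //= z' Kz' bz'; have := bnear z' bz' Kz'.
  by have := ler_distcD (g z') (g z) (ratC R c); rewrite (distcC (g z') (g z)); lra.
have [s [sD scover]] := compact_nbhs_finite_cover Kcompact cover.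
have fits : fits_code (s, dl) g by move=> p /sD.
exists (s, dl) => z Kz; have [p ps zp] := scover z Kz.
have := code_fn_fits Ag fits ps Kz zp; have := sD p ps z Kz zp.
have := ler_distcD (code_fn (s, dl) z) (ratC R p.2) (g z).
by rewrite (distcC (ratC R p.2)) /=; lra.
Qed.

End DenseFamily.

Section CountableOperations.
Variables (d : measure_display) (Omega : measurableType d).

Lemma measurable_countable_exists (T : countType) (P : T -> Prop) (S : T -> set Omega) :
  (forall t, P t -> measurable (S t)) -> measurable [set w | exists t, P t /\ S t w].
Proof.
move=> mS; have -> : [set w | exists t, P t /\ S t w] = \bigcup_t [set w | P t /\ S t w].
  by apply/seteqP; split=> w /= [t]; exists t.
apply: countable_bigcupT_measurable => [|t]; first exact: countableP.
have [Pt|nPt] := pselect (P t).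
  suff -> : [set w | P t /\ S t w] = S t by exact: mS.
  by apply/seteqP; split=> [w []|w Stw].
suff -> : [set w | P t /\ S t w] = set0 by [].
by apply/seteqP; split=> w // [].
Qed.

Lemma measurable_countable_forall (T : countType) (P : T -> Prop) (S : T -> set Omega) :
  (forall t, P t -> measurable (S t)) -> measurable [set w | forall t, P t -> S t w].
Proof.
move=> mS; have -> : [set w | forall t, P t -> S t w] = ~` [set w | exists t, P t /\ ~ S t w].
  apply/seteqP; split=> w /=; first by move=> PS [t [/PS]].
  by move=> nPS t Pt; apply: contrapT => nS; apply: nPS; exists t.
apply: measurableC; apply: measurable_countable_exists => t Pt.
exact/measurableC/mS.
Qed.

Lemma measurable_seq_forall (T : eqType) (s : seq T) (S : T -> set Omega) :
  (forall t, t \in s -> measurable (S t)) -> measurable [set w | forall t, t \in s -> S t w].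
Proof.
elim: s => [|a s IH] mS.
  by rewrite (_ : [set w | _] = setT) //; apply/seteqP; split => w //= _ t.
have -> : [set w | forall t, t \in a :: s -> S t w] = S a `&` [set w | forall t, t \in s -> S t w].
  apply/seteqP; split=> w /=; first by move=> aSw; split=> [|t ts]; apply: aSw;
    rewrite inE ?eqxx ?ts ?orbT.
  by move=> [Saw sSw] t; rewrite inE => /orP[/eqP->|/sSw].
apply: measurableI; first by apply: mS; rewrite mem_head.
by apply: IH => t ts; apply: mS; rewrite in_cons ts orbT.
Qed.

End CountableOperations.

Section BorelComplex.
Variable R : realType.
Local Notation C := (CC R).

Lemma borel_closed (S : set C) : closed S -> <<s (open : set (set C)) >> S.
Proof.
move=> Sclosed; rewrite -[S]setCK -setTD; apply: sigma_algebraCD.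
by apply: sub_sigma_algebra; rewrite /= openC.
Qed.

Lemma closed_cmod_affine_le (a b : C) (c : R) : closed [set x : C | cmod (a * x + b) <= c].
Proof.
apply: (@preimage_closed _ _ (fun x => cmod (a * x + b)) [set y | y <= c]); last exact: closed_le.
move=> x _; apply: continuous_comp; last exact: cmod_continuous.
apply: continuousD; last exact: cst_continuous.
by apply: continuousM; [exact: cst_continuous | exact: cvg_id].
Qed.

End BorelComplex.

Section HausdorffTopology.
Variable R : realType.
Local Notation C := (CC R).

Lemma hausdorff_dist_le (X Y : set C) (r : R) :
  (forall a, X a -> exists2 b, Y b & cmod (a - b) <= r) ->
  (forall b, Y b -> exists2 a, X a & cmod (b - a) <= r) ->
  (hausdorff_dist X Y <= r%:E)%E.
Proof.
move=> XY YX; rewrite /hausdorff_dist ge_max; apply/andP; split.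
  apply: ge_ereal_sup => _ [a Xa <-]; have [b Yb ab] := XY a Xa.
  by apply: ge_ereal_inf; exists (cmod (a - b))%:E; [exists b | rewrite lee_fin].
apply: ge_ereal_sup => _ [b Yb <-]; have [a Xa ba] := YX b Yb.
by apply: ge_ereal_inf; exists (cmod (b - a))%:E; [exists a | rewrite lee_fin].
Qed.

Definition rat_ball (q : (rat * rat) * rat) : set C :=
  [set l | cmod (ratC R q.1 - l) < ratr q.2].

Definition rat_balls_union (Q : seq ((rat * rat) * rat)) : set C :=
  [set l | exists2 q, q \in Q & rat_ball q l].

Definition rat_balls_pattern (Q : seq ((rat * rat) * rat)) : set (set C) :=
  [set Y | nonempty_compacts Y /\ Y `<=` rat_balls_union Q /\
           forall q, q \in Q -> Y `&` rat_ball q !=set0].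

Lemma rat_ball_nbhs q l : rat_ball q l -> nbhs l (rat_ball q).
Proof.
rewrite /rat_ball /= => ql; apply/nbhs_cmodP.
exists (ratr q.2 - cmod (ratC R q.1 - l)); first by rewrite subr_gt0.
by move=> y ly /=; have := ler_distcD (ratC R q.1) l y; lra.
Qed.

Lemma open_rat_balls_union Q : open (rat_balls_union Q).
Proof.
rewrite openE => l [q qQ ql]; apply: filterS (rat_ball_nbhs ql) => y qy.
by exists q.
Qed.

Lemma hausdorff_open_rat_balls_pattern (U : set (set C)) (X : set C) :
  hausdorff_open U -> U X -> exists Q, rat_balls_pattern Q `<=` U /\ rat_balls_pattern Q X.
Proof.
move=> [Ucompacts Uopen] UX; have [e e0 eU] := Uopen _ UX.
have [Xne Xcompact] := Ucompacts _ UX.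
have [rho rho0 rho_e] := @ratr_between R 0 (e / 3) ltac:(lra).
pose D := [set c : rat * rat | exists2 x, X x & cmod (ratC R c - x) < ratr rho].
have cover x : X x -> exists2 c, D c & nbhs x (rat_ball (c, rho)).
  move=> Xx; have [c xc] := ratC_dense x rho0.
  exists c; first by exists x; rewrite // distcC.
  by apply: rat_ball_nbhs; rewrite /rat_ball /= distcC.
have [s [sD scover]] := compact_nbhs_finite_cover Xcompact cover.
exists [seq (c, rho) | c <- s]; split.
  move=> Y [Ycompacts [Yballs Ymeets]]; apply: eU Ycompacts _.
  apply: (@le_lt_trans _ _ (2 * ratr rho)%:E); last by rewrite lte_fin; lra.
  apply: hausdorff_dist_le.
  - move=> a Xa; have [c cs ac] := scover a Xa.
    have [b [Yb bc]] := Ymeets (c, rho) (map_f _ cs).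
    exists b => //; move: ac bc; rewrite /rat_ball /= => ac bc.
    by have := ler_distcD a (ratC R c) b; rewrite (distcC a (ratC R c)); lra.
  - move=> b Yb; have [q /mapP[c cs ->] bq] := Yballs b Yb.
    have [x Xx cx] := sD c cs.
    exists x => //; move: bq; rewrite /rat_ball /= => bq.
    by have := ler_distcD b (ratC R c) x; rewrite (distcC b (ratC R c)); lra.
split; first by split.
split; first by move=> l /scover[c cs lc]; exists (c, rho) => //; exact: map_f.
by move=> q /mapP[c cs ->]; have [x Xx cx] := sD c cs; exists x.
Qed.

End HausdorffTopology.

Section RandomCompactCriterion.
Variables (R : realType) (d : measure_display) (Omega : measurableType d).
Local Notation C := (CC R).
Variable F : Omega -> set C.
Hypothesis F_compacts : forall w, nonempty_compacts (F w).
Hypothesis miss_measurable : forall L : set C, compact L ->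
  measurable [set w | forall l, L l -> ~ F w l].

Lemma hit_ball_measurable (a : C) (r : R) :
  measurable [set w | exists l, F w l /\ cmod (a - l) < r].
Proof.
have -> : [set w | exists l, F w l /\ cmod (a - l) < r] = [set w | exists rho : rat,
    ratr rho < r /\ (~` [set w | forall l, cmod (a - l) <= ratr rho -> ~ F w l]) w].
  apply/seteqP; split=> w /=.
    move=> [l [Fl al]]; have [rho al_rho rho_r] := ratr_between al.
    by exists rho; split=> // miss; apply: (miss l) => //; exact: ltW.
  move=> [rho [rho_r hit]]; apply: contrapT => nhit; apply: hit => l al Fl.
  by apply: nhit; exists l; split=> //; lra.
apply: measurable_countable_exists => rho _; apply: measurableC.
exact: miss_measurable _ (@compact_cmod_ball R a (ratr rho)).
Qed.

Lemma subset_open_measurable (O : set C) : open O ->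
  measurable [set w | forall l, F w l -> O l].
Proof.
move=> Oopen; have -> : [set w | forall l, F w l -> O l] = [set w | forall m : nat, True ->
    forall l, ([set y | cmod (0 - y) <= m%:R] `&` ~` O) l -> ~ F w l].
  apply/seteqP; split=> w /=; first by move=> FO m _ l [_ nOl] /FO.
  move=> miss l Fl; apply: contrapT => nOl.
  have lm : cmod (0 - l) <= (Num.Def.truncn (cmod (0 - l))).+1%:R.
    exact: ltW (truncnS_gt _).
  exact: (miss _ I l (conj lm nOl) Fl).
apply: measurable_countable_forall => m _; apply: miss_measurable.
by apply: compact_closedI; [exact: compact_cmod_ball | rewrite closedC].
Qed.

Lemma rat_balls_pattern_measurable Q : measurable [set w | rat_balls_pattern Q (F w)].
Proof.
have -> : [set w | rat_balls_pattern Q (F w)] = [set w | forall l, F w l -> rat_balls_union Q l]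
    `&` [set w | forall q, q \in Q ->
           [set w | exists l, F w l /\ cmod (ratC R q.1 - l) < ratr q.2] w].
  apply/seteqP; split=> w /=; first by case=> _ [].
  by case=> FQ Fhit; split; [exact: F_compacts | split].
apply: measurableI; first exact/subset_open_measurable/open_rat_balls_union.
by apply: measurable_seq_forall => q _; exact: hit_ball_measurable.
Qed.

Lemma hausdorff_open_measurable (U : set (set C)) : hausdorff_open U ->
  measurable [set w | U (F w)].
Proof.
move=> Uopen; have -> : [set w | U (F w)] =
    [set w | exists Q, rat_balls_pattern Q `<=` U /\ rat_balls_pattern Q (F w)].
  apply/seteqP; split=> [w UF|w [Q [QU /QU//]]].
  exact: hausdorff_open_rat_balls_pattern Uopen UF.
by apply: measurable_countable_exists => Q _; exact: rat_balls_pattern_measurable.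
Qed.

Lemma random_compact_set_of_miss_measurable : random_compact_set F.
Proof.
split=> // B; suff : @hausdorff_borel R `<=` [set B | measurable (F @^-1` B)] by apply.
apply: smallest_sub => [|U /hausdorff_open_measurable//]; split.
- by rewrite /= (_ : F @^-1` set0 = set0) // preimage_set0.
- move=> B' /= mB'; rewrite (_ : F @^-1` _ = ~` (F @^-1` B')); first exact: measurableC.
  by apply/seteqP; split=> w /= => [[]//|nB]; split.
- by move=> Bs mBs; rewrite /= preimage_bigcup; exact: bigcupT_measurable.
Qed.

End RandomCompactCriterion.

Section SpectrumMeasurability.
Variables (R : realType) (d : measure_display) (Omega : measurableType d) (n : nat).
Local Notation C := (CC R).
Local Notation V := 'rV[C]_n.
Variables (K : set V) (A : set (V -> C)) (f : Omega -> V -> C).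
Hypotheses (Kcompact : compact K) (Aunif : uniform_algebra K A).
Hypotheses (fA : forall w, A (f w)) (f_measurable : forall z, K z -> borel_measurable_C (fun w => f w z)).

Local Notation code_fn := (code_fn K A).

Definition near_inverse_event (p : rat * rat) (j : fn_code n) : set Omega :=
  [set w | forall b, K `&` rat_box b !=set0 ->
     cmod ((ratC R p - f w (box_point K b)) * code_fn j (box_point K b) - 1) <= 1 / 2].

Lemma near_inverse_event_measurable p j : measurable (near_inverse_event p j).
Proof.
apply: measurable_countable_forall => b Kb; set z := box_point K b.
have [Kz _] := box_pointP Kb.
have closed_test : closed [set x : C | cmod ((ratC R p - x) * code_fn j z - 1) <= 1 / 2].
  rewrite (_ : [set x | _] = [set x | cmod (- code_fn j z * x + (ratC R p * code_fn j z - 1)) <= 1 / 2]).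
    exact: closed_cmod_affine_le.
  by apply: funext => x; congr (cmod _ <= _); ring.
exact: f_measurable Kz _ (borel_closed closed_test).
Qed.

Lemma near_inverse_on_K p j w : near_inverse_event p j w ->
  forall z, K z -> cmod ((ratC R p - f w z) * code_fn j z - 1) <= 1 / 2.
Proof.
move=> near_w; apply: cmod_le_on_box_points near_w; apply: (ua_continuous Aunif).
exact (ua_sub Aunif (ua_mul Aunif (ua_sub Aunif (ua_cst Aunif _) (fA w)) (code_fn_in Aunif j))
  (ua_cst Aunif 1)).
Qed.

Lemma notin_spectrum_code_fn h l : A h -> ~ spectrum K A h l ->
  exists j, forall z, K z -> cmod ((l - h z) * code_fn j z - 1) <= 1 / 4.
Proof.
move=> Ah /notin_spectrumP[g Ag lhg]; have [Mh Mh0 hMh] := ua_bounded Kcompact Aunif Ah.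
pose e := 1 / (4 * (cmod l + Mh + 1)); have l0 := cmod_ge0 l.
have e0 : 0 < e by rewrite divr_gt0 //; lra.
have lMh_e : (cmod l + Mh) * e <= 1 / 4 by rewrite /e mulrA mulr1 ler_pdivrMr; lra.
have [j jg] := code_fn_dense Kcompact Aunif Ag e0; exists j => z Kz.
have -> : (l - h z) * code_fn j z - 1 = (l - h z) * (code_fn j z - g z) by rewrite mulrBr lhg.
rewrite cmodM; apply: le_trans lMh_e; apply: ler_pM; rewrite ?cmod_ge0 ?jg //.
by have := ler_cmodD l (- h z); rewrite cmodN; have := hMh z Kz; lra.
Qed.

(* [(p, j, M)]: a rational centre, the code of an approximate inverse of [p - f w],
   and a rational bound for that inverse on [K]. *)
Definition inverse_data := ((rat * rat) * fn_code n * rat)%type.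

Definition bounded_data (t : inverse_data) :=
  forall z, K z -> cmod (code_fn t.1.2 z) <= ratr t.2.

Definition data_ball (t : inverse_data) : set C :=
  [set l | cmod (l - ratC R t.1.1) * ratr t.2 < 1 / 2].

Lemma notin_spectrum_near w l : ~ spectrum K A (f w) l ->
  exists2 t, bounded_data t /\ near_inverse_event t.1.1 t.1.2 w & nbhs l (data_ball t).
Proof.
move=> /(notin_spectrum_code_fn (fA w))[j lj].
have [M0 M00 gM0] := ua_bounded Kcompact Aunif (code_fn_in Aunif j).
have [M M0M _] := @ratr_between R M0 (M0 + 1) ltac:(lra).
(* Moving the centre from [l] to [p] costs at most 1/8, on top of the 1/4 of [lj]. *)
pose r : R := 1 / (8 * ratr M); have r0 : 0 < r by rewrite divr_gt0 //; lra.
have rM : r * ratr M = 1 / 8 by rewrite /r; field; apply/eqP; lra.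
have [p lp] := ratC_dense l r0.
exists (p, j, M); first split.
- by move=> z Kz; apply: le_trans (gM0 z Kz) _; exact: ltW.
- move=> b Kb; have [Kz _] := box_pointP Kb; move: (box_point K b) Kz => z Kz /=.
  rewrite (_ : _ - 1 = (l - f w z) * code_fn j z - 1 + (ratC R p - l) * code_fn j z); last ring.
  apply: le_trans (ler_cmodD _ _) _; rewrite cmodM.
  have : cmod (ratC R p - l) * cmod (code_fn j z) <= 1 / 8.
    rewrite -rM; apply: ler_pM; rewrite ?cmod_ge0 //; first by rewrite distcC; exact: ltW.
    by apply: le_trans (gM0 z Kz) _; exact: ltW.
  by have := lj z Kz; lra.
- apply/nbhs_cmodP; exists r => // l' ll'; rewrite /data_ball /=.
  have := ler_distcD l' l (ratC R p); rewrite (distcC l' l) => l'p.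
  have : cmod (l' - ratC R p) * ratr M <= 2 * r * ratr M by rewrite ler_pM2r; lra.
  by rewrite -mulrA rM; lra.
Qed.

Lemma near_inverse_notin_spectrum w t l : bounded_data t ->
  near_inverse_event t.1.1 t.1.2 w -> data_ball t l -> ~ spectrum K A (f w) l.
Proof.
move=> tM /near_inverse_on_K tw tl.
have small : 1 / 2 + cmod (l - ratC R t.1.1) * ratr t.2 < 1.
  by move: tl; rewrite /data_ball /=; lra.
exact (notin_spectrum_perturb Aunif (fA w) (code_fn_in Aunif _) tM tw small).
Qed.

Lemma spectrum_miss_measurable (L : set C) : compact L ->
  measurable [set w | forall l, L l -> ~ spectrum K A (f w) l].
Proof.
move=> Lcompact; have -> : [set w | forall l, L l -> ~ spectrum K A (f w) l] =
    [set w | exists s : seq inverse_data,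
      ((forall t, t \in s -> bounded_data t) /\ L `<=` [set l | exists2 t, t \in s & data_ball t l])
      /\ [set w | forall t, t \in s -> near_inverse_event t.1.1 t.1.2 w] w].
  apply/seteqP; split=> w /=.
    move=> Lmiss; have [s [sD scover]] :=
      compact_nbhs_finite_cover Lcompact (fun l Ll => notin_spectrum_near (Lmiss l Ll)).
    by exists s; split; first split; move=> // t /sD[].
  move=> [s [[sM scover] sw]] l /scover[t ts tl].
  exact: near_inverse_notin_spectrum (sM t ts) (sw t ts) tl.
apply: measurable_countable_exists => s _; apply: measurable_seq_forall => t _.
exact: near_inverse_event_measurable.
Qed.

End SpectrumMeasurability.

Theorem proposition6p7 (R : realType) (d : measure_display)
  (Omega : measurableType d) (n : nat) (K : set 'rV[CC R]_n)
  (A : set ('rV[CC R]_n -> CC R))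
  (f : Omega -> 'rV[CC R]_n -> CC R) :
  compact K ->
  uniform_algebra K A ->
  max_ideal_space_separable_metric K A ->
  (forall w, A (f w)) ->
  (forall z, K z -> borel_measurable_C (fun w => f w z)) ->
  random_compact_set (fun w => spectrum K A (f w)).
Proof.
move=> Kcompact Aunif _ fA f_measurable.
apply: random_compact_set_of_miss_measurable => [w|L Lcompact].
  by split; [exact: spectrum_neq0 | exact: spectrum_compact].
exact: spectrum_miss_measurable.
Qed.
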